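(* In the standing setting, let $k\in\mathbb{N}$, let $X',T\subseteq X$ and let $c$ be a colour such that $X'$ is $(2k,T,c)$-free. Let $\sigma=(e_0,m_1,e_1,\dots,e_{\ell-1},m_\ell)$ be an $X'$-switching from $c$ to $(m_\ell)_C$ of length $\ell\leq k$. Let $A$ be a set of at most $k$ edges of $M\setminus\{(c)_M\}$ and let $B\subseteq X'$ with $|B|\leq k$. Suppose $(\sigma)_X\cap T=\emptyset$, $(\sigma)_X\cap(A)_X=\emptyset$, $(\sigma)_X\cap B=\emptyset$, $T\cap(A)_X=\emptyset$ and $(A)_X\cap B=\emptyset$. Then there is a rainbow matching $\tilde M$ of size $n$ in $G$ which contains no edge of colour $(m_\ell)_C$, contains every edge of $A$, and covers no vertex of $(m(\sigma))_X\cup B$.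
   Context: Standing setting: $G$ is a bipartite graph with bipartition classes $X,Y$ which is the union of $n+1$ pairwise edge-disjoint matchings; these matchings are the colours, and the colour of an edge is the matching containing it. A matching is rainbow if its edges have distinct colours. $M$ is a rainbow matching of size $n$ in $G$, and $c^*$ is the unique colour not used by $M$. Notation: for an edge $e$, $(e)_C$ is its colour, $(e)_X=e\cap X$, $(e)_Y=e\cap Y$. For $x\in X$ covered by $M$: $(x)_M$ is the edge of $M$ at $x$, $(x)_C$ its colour, $(x)_Y$ its endpoint in $Y$ (undefined if $x$ is not covered). Analogously $(y)_M,(y)_C,(y)_X$ for $y\in Y$. For a colour $c\neq c^*$: $(c)_M$ is the colour-$c$ edge of $M$, $(c)_X=(c)_M\cap X$, $(c)_Y=(c)_M\cap Y$ (undefined for $c^*$). For a set $S$ of such objects, $(S)_M,(S)_X,(S)_Y,(S)_C$ are the sets of the defined images of its elements. Free sets: for $X',T\subseteq X$, a real $k\ge 0$ and a colour $c$, $X'$ is $(k,T,c)$-free if $T\cap X'=\emptyset$, $c\notin(X'\cup T)_C$, and for every set $A$ of at most $k$ edges of $M\setminus((T)_M\cup\{(c)_M\})$ and every $B\subseteq X'$ with $|B|\le k$ and $(A)_X\cap B=\emptyset$, there is a rainbow matching $M'$ of size $n$ in $G$ containing every edge of $A$, covering no vertex of $B$, and containing no edge of colour $c$. Switchings: for $X'\subseteq X$, a sequence of edges $\sigma=(e_0,m_1,e_1,m_2,\dots,e_{\ell-1},m_\ell)$ with $\ell\ge1$ is an $X'$-switching if (i) each $m_i\in M$ and each $e_i\notin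 M$; (ii) for each $i$, $m_i$ and $e_i$ have the same colour $c_i$ (where $c_0$ is the colour of $e_0$ and $c_\ell$ that of $m_\ell$); (iii) for each $i$, $e_{i-1}\cap m_i=\{(m_i)_Y\}$; (iv) for all $i\neq j$: $e_i\cap e_j=\emptyset$, $e_{i-1}\cap m_j=\emptyset$, and $c_i\neq c_j$; (v) $(e_i)_X\in X'$ for each $i$. It is a switching from $c_0$ to $c_\ell$ of length $\ell$. Write $e(\sigma)=\{e_0,\dots,e_{\ell-1}\}$, $m(\sigma)=\{m_1,\dots,m_\ell\}$, $(\sigma)_X=(e(\sigma))_X\cup(m(\sigma))_X$. *)

From HB Require Import structures.
From mathcomp Require Import all_boot.
Set Implicit Arguments.
Unset Strict Implicit.
Unset Printing Implicit Defensive.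

(* Bipartite graph with classes X, Y: an edge is a pair (x, y) : X * Y.
   G has edge set E; the n+1 pairwise edge-disjoint matchings are the colour
   classes of col : X * Y -> C with #|C| = n+1, and the colouring is proper. *)
Section Rainbow.
Variables (X Y C : finType).
Implicit Types (f g : X * Y) (N E : {set X * Y}).

Definition vdisjoint f g := (f.1 != g.1) && (f.2 != g.2).

Definition is_matching N := {in N &, forall f g, f != g -> vdisjoint f g}.

Definition proper_colouring E (col : X * Y -> C) :=
  {in E &, forall f g, f != g -> col f = col g -> vdisjoint f g}.

Definition rainbow_matching E (col : X * Y -> C) N :=
  [/\ N \subset E, is_matching N & {in N &, injective col}].

Definition edgesX N : {set X} := [set f.1 | f in N].

Definition free (n : nat) E (col : X * Y -> C) (M : {set X * Y}) (k : nat)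
    (X' T : {set X}) (c : C) : Prop :=
  [/\ [disjoint T & X'],
      (forall f, f \in M -> f.1 \in X' :|: T -> col f != c) &
      forall (A : {set X * Y}) (B : {set X}),
        A \subset M ->
        (forall f, f \in A -> f.1 \notin T /\ col f != c) ->
        #|A| <= k -> B \subset X' -> #|B| <= k ->
        [disjoint edgesX A & B] ->
        exists M' : {set X * Y},
          [/\ rainbow_matching E col M', #|M'| = n, A \subset M',
              (forall f, f \in M' -> f.1 \notin B) &
              (forall f, f \in M' -> col f != c)]].

(* switching sigma = (e 0, m 1, e 1, ..., e (l-1), m l); colours c_i *)
Definition swcol (col : X * Y -> C) (l : nat) (e m : nat -> X * Y) (i : nat) :=
  if i < l then col (e i) else col (m l).

Definition switching E (col : X * Y -> C) (M : {set X * Y}) (X' : {set X})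
    (l : nat) (e m : nat -> X * Y) : Prop :=
  [/\ 0 < l,
      (forall i, i < l -> [/\ e i \in E, e i \notin M & (e i).1 \in X']),
      (forall i, 0 < i <= l -> m i \in M),
      (forall i, 0 < i < l -> col (m i) = col (e i)) &
      [/\
      (forall i, 0 < i <= l -> (e i.-1).2 = (m i).2 /\ (e i.-1).1 != (m i).1),
      (forall i j, i < l -> j < l -> i != j -> vdisjoint (e i) (e j)),
      (forall i j, 0 < i <= l -> 0 < j <= l -> i != j -> vdisjoint (e i.-1) (m j)) &
      (forall i j, i <= l -> j <= l -> i != j -> swcol col l e m i != swcol col l e m j)]].

Definition switch_mX (l : nat) (m : nat -> X * Y) : {set X} :=
  [set (m (val i).+1).1 | i : 'I_l].
Definition switch_eX (l : nat) (e : nat -> X * Y) : {set X} :=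
  [set (e (val i)).1 | i : 'I_l].
Definition switchX (l : nat) (e m : nat -> X * Y) : {set X} :=
  switch_eX l e :|: switch_mX l m.

End Rainbow.

From HB Require Import structures.
From mathcomp Require Import all_boot.

(* Freeness of X' is applied with A enlarged by the edges m_1, ..., m_l of the
   switching and B enlarged by the X-endpoints of e_0, ..., e_(l-1).  The
   resulting rainbow matching M' contains every m_i and avoids every e_i, so
   exchanging the m_i for the e_i keeps it a rainbow matching of size n: e_i
   lies on the Y-vertex of m_(i+1) and carries colour c_i, while the colours of
   the m_i are c_1, ..., c_l.  The colour c_l leaves, c_0 = c enters (and M'
   avoided c), and the X-endpoints of the m_i become uncovered. *)

Set Implicit Arguments.
Unset Strict Implicit.
Unset Printing Implicit Defensive.

Section SwitchingSets.
Variables (X Y : finType) (l : nat) (e m : nat -> X * Y).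
Implicit Types (f : X * Y) (N A : {set X * Y}) (Z : {set X}).

Lemma vdisjointC f g : vdisjoint f g = vdisjoint g f.
Proof. by rewrite /vdisjoint eq_sym [f.2 == _]eq_sym. Qed.

Lemma edgesXU N N' : edgesX (N :|: N') = edgesX N :|: edgesX N'.
Proof. exact: imsetU. Qed.

Definition switch_medges : {set X * Y} := [set m (val i).+1 | i : 'I_l].
Definition switch_eedges : {set X * Y} := [set e (val i) | i : 'I_l].

Definition switch_along N := (N :\: switch_medges) :|: switch_eedges.

Lemma switch_medgesP f :
  reflect (exists2 j, j < l & f = m j.+1) (f \in switch_medges).
Proof.
by apply: (iffP imsetP) => [[j _ ->]|[j jl ->]]; [exists j | exists (Ordinal jl)].
Qed.

Lemma switch_eedgesP f :
  reflect (exists2 j, j < l & f = e j) (f \in switch_eedges).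
Proof.
by apply: (iffP imsetP) => [[j _ ->]|[j jl ->]]; [exists j | exists (Ordinal jl)].
Qed.

Lemma switch_mXP x :
  reflect (exists2 j, j < l & x = (m j.+1).1) (x \in switch_mX l m).
Proof.
by apply: (iffP imsetP) => [[j _ ->]|[j jl ->]]; [exists j | exists (Ordinal jl)].
Qed.

Lemma switch_eXP x :
  reflect (exists2 j, j < l & x = (e j).1) (x \in switch_eX l e).
Proof.
by apply: (iffP imsetP) => [[j _ ->]|[j jl ->]]; [exists j | exists (Ordinal jl)].
Qed.

Lemma edgesX_switch_medges : edgesX switch_medges = switch_mX l m.
Proof. by rewrite /edgesX -imset_comp. Qed.

Lemma switch_eX_subset : switch_eX l e \subset switchX l e m.
Proof. exact: subsetUl. Qed.

Lemma switch_mX_subset : switch_mX l m \subset switchX l e m.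
Proof. exact: subsetUr. Qed.

Lemma card_switch_eX : #|switch_eX l e| <= l.
Proof. by rewrite (leq_trans (leq_imset_card _ _)) ?card_ord. Qed.

Lemma notin_switch_medges_neq f j : f \notin switch_medges -> j < l -> f != m j.+1.
Proof. by move=> fms jl; apply: contraNneq fms => ->; apply/switch_medgesP; exists j. Qed.

Lemma switch_alongP N f : f \in switch_along N ->
  (f \in N /\ f \notin switch_medges) \/ exists2 j, j < l & f = e j.
Proof. by case/setUP => [/setDP[]|/switch_eedgesP]; [left | right]. Qed.

Lemma sub_switch_along A N :
  A \subset N -> [disjoint edgesX A & switch_mX l m] -> A \subset switch_along N.
Proof.
move=> AN dAm; apply/subsetP => f fA.
rewrite !inE (subsetP AN f fA) andbT; apply/orP; left.
apply/negP => /switch_medgesP[j jl fe].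
move: (disjointFr dAm (imset_f _ fA)); rewrite fe => /negbT/negP; apply.
by apply/switch_mXP; exists j.
Qed.

Lemma switch_along_notin N Z f :
  (forall g, g \in N -> g.1 \notin Z) -> [disjoint switch_eX l e & Z] ->
  f \in switch_along N -> f.1 \notin Z.
Proof.
move=> NZ dZ /switch_alongP[[fN _]|[j jl ->]]; first exact: NZ.
by rewrite (disjointFr dZ) //; apply/switch_eXP; exists j.
Qed.

End SwitchingSets.

Section Switching.
Variables (X Y C : finType) (E : {set X * Y}) (col : X * Y -> C)
  (M : {set X * Y}) (X' : {set X}) (l : nat) (e m : nat -> X * Y).
Hypothesis sw : switching E col M X' l e m.
Implicit Types (f : X * Y) (A : {set X * Y}) (B T : {set X}).

Local Notation ms := (switch_medges l m).
Local Notation es := (switch_eedges l e).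
Local Notation c_ := (swcol col l e m).

Lemma switch_gt0 : 0 < l.
Proof. by case: sw. Qed.

Lemma switch_e_edge i : i < l -> [/\ e i \in E, e i \notin M & (e i).1 \in X'].
Proof. by case: sw => _ He _ _ _; apply: He. Qed.

Lemma switch_m_edge i : 0 < i <= l -> m i \in M.
Proof. by case: sw => _ _ Hm _ _; apply: Hm. Qed.

Lemma switch_e_meet_m i : i < l -> (e i).2 = (m i.+1).2 /\ (e i).1 != (m i.+1).1.
Proof. by case: sw => _ _ _ _ [H3 _ _ _] il; apply: (H3 i.+1 il). Qed.

Lemma switch_e_vdisjoint i j : i < l -> j < l -> i != j -> vdisjoint (e i) (e j).
Proof. by case: sw => _ _ _ _ [_ H4a _ _]; apply: H4a. Qed.

Lemma switch_eX_neq_mX i j : i < l -> j < l -> (e i).1 != (m j.+1).1.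
Proof.
move=> il jl; have [<-|ij] := eqVneq i j; first by case: (switch_e_meet_m il).
by case: sw => _ _ _ _ [_ _ H4b _]; case/andP: (H4b i.+1 j.+1 il jl ij).
Qed.

Lemma col_switch_e i : i < l -> col (e i) = c_ i.
Proof. by rewrite /swcol => ->. Qed.

Lemma col_switch_m i : 0 < i <= l -> col (m i) = c_ i.
Proof.
case: sw => _ _ _ Hcol _ /andP[i0 il]; rewrite /swcol; case: ltnP => h.
  by apply: Hcol; rewrite i0 h.
by have -> : i = l by apply/eqP; rewrite eqn_leq il h.
Qed.

Lemma swcol_inj i j : i <= l -> j <= l -> c_ i = c_ j -> i = j.
Proof. by case: sw => _ _ _ _ [_ _ _ H4c] il jl; apply: contra_eq; apply: H4c. Qed.

Lemma col_switch_m_inj i j : i < l -> j < l -> col (m i.+1) = col (m j.+1) -> i = j.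
Proof. by move=> il jl; rewrite !col_switch_m // => /swcol_inj-/(_ il jl) []. Qed.

Lemma col_switch_e_inj i j : i < l -> j < l -> col (e i) = col (e j) -> i = j.
Proof. by move=> il jl; rewrite !col_switch_e //; apply: swcol_inj; apply: ltnW. Qed.

Lemma col_switch_m_neq_e0 j : j < l -> col (m j.+1) != col (e 0).
Proof.
move=> jl; rewrite col_switch_m // col_switch_e ?switch_gt0 //.
by apply/eqP => /swcol_inj-/(_ jl (leq0n l)).
Qed.

Lemma col_switch_e_neq_last i : i < l -> col (e i) != col (m l).
Proof.
move=> il; rewrite col_switch_e // col_switch_m ?switch_gt0 ?leqnn //.
apply/eqP => /swcol_inj-/(_ (ltnW il) (leqnn l)) eq_il.
by rewrite eq_il ltnn in il.
Qed.

Lemma col_switch_e_m i : 0 < i < l -> col (e i) = col (m i).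
Proof. by case: sw => _ _ _ Hcol _ /Hcol ->. Qed.

Lemma card_switch_medges : #|ms| = l.
Proof.
rewrite card_in_imset ?card_ord // => i j _ _ /(congr1 col).
by move/(col_switch_m_inj (ltn_ord i) (ltn_ord j)); apply: val_inj.
Qed.

Lemma card_switch_eedges : #|es| = l.
Proof.
rewrite card_in_imset ?card_ord // => i j _ _ /= eij; apply/val_inj/eqP.
apply: contraT => ij; have := switch_e_vdisjoint (ltn_ord i) (ltn_ord j) ij.
by rewrite eij /vdisjoint !eqxx.
Qed.

Lemma switch_medges_subset : ms \subset M.
Proof. by apply/subsetP => _ /switch_medgesP[j jl ->]; apply: switch_m_edge. Qed.

Lemma last_switch_medges : m l \in ms.
Proof. by apply/switch_medgesP; exists l.-1; rewrite prednK ?switch_gt0. Qed.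

Lemma disjoint_switch_eX_mX : [disjoint switch_eX l e & switch_mX l m].
Proof.
rewrite disjoints_subset; apply/subsetP => _ /switch_eXP[i il ->].
rewrite inE; apply/negP => /switch_mXP[j jl eq_ij].
by move: (switch_eX_neq_mX il jl); rewrite eq_ij eqxx.
Qed.

Lemma free_switch_extension n k T A B :
  free n E col M k X' T (col (e 0)) ->
  A \subset M -> (forall f, f \in A -> col f != col (e 0)) ->
  #|A| + l <= k -> B \subset X' -> #|B| + l <= k ->
  [disjoint switchX l e m & T] -> [disjoint switchX l e m & edgesX A] ->
  [disjoint switchX l e m & B] -> [disjoint T & edgesX A] ->
  [disjoint edgesX A & B] ->
  exists M' : {set X * Y},
    [/\ rainbow_matching E col M', #|M'| = n, A :|: ms \subset M',
        (forall f, f \in M' -> f.1 \notin B :|: switch_eX l e) &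
        (forall f, f \in M' -> col f != col (e 0))].
Proof.
move=> [_ _ Hfree] AM Ac Ak BX' Bk sT sA sB TA AB; apply: Hfree.
- by rewrite subUset AM switch_medges_subset.
- move=> f /setUP[fA|/switch_medgesP[j jl ->]].
    by split; [rewrite (disjointFl TA) ?imset_f | exact: Ac].
  split; last exact: col_switch_m_neq_e0.
  rewrite (disjointFr sT) // (subsetP (switch_mX_subset _ _ _)) //.
  by apply/switch_mXP; exists j.
- by rewrite (leq_trans (leq_card_setU _ _)) // card_switch_medges.
- rewrite subUset BX'; apply/subsetP => _ /switch_eXP[j jl ->].
  by case: (switch_e_edge jl).
- rewrite (leq_trans (leq_card_setU _ _)) // (leq_trans _ Bk) //.
  by rewrite leq_add2l card_switch_eX.
- rewrite edgesXU edgesX_switch_medges -setI_eq0 setIUl !setIUr !setU_eq0.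
  rewrite !setI_eq0 AB; apply/and3P; split.
  + by rewrite disjoint_sym (disjointWl (switch_eX_subset _ _ _) sA).
  + exact: disjointWl (switch_mX_subset _ _ _) sB.
  + by rewrite disjoint_sym disjoint_switch_eX_mX.
Qed.

Section Exchange.
Variable M' : {set X * Y}.
Hypotheses (rbM' : rainbow_matching E col M') (msM' : ms \subset M').
Hypothesis M'_eX : forall f, f \in M' -> f.1 \notin switch_eX l e.
Hypothesis M'_c : forall f, f \in M' -> col f != col (e 0).

Lemma switch_m_in j : j < l -> m j.+1 \in M'.
Proof. by move=> jl; apply: (subsetP msM'); apply/switch_medgesP; exists j. Qed.

Lemma switch_e_notin j : j < l -> e j \notin M'.
Proof. by move=> jl; apply: contraL (@M'_eX (e j)) _; apply/switch_eXP; exists j. Qed.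

Lemma vdisjoint_switch_e f j :
  f \in M' -> f \notin ms -> j < l -> vdisjoint f (e j).
Proof.
case: rbM' => _ M'match _ fM fms jl; apply/andP; split.
  by apply: contraNneq (M'_eX fM) => ->; apply/switch_eXP; exists j.
have [-> _] := switch_e_meet_m jl.
by case/andP: (M'match _ _ fM (switch_m_in jl) (notin_switch_medges_neq fms jl)).
Qed.

Lemma col_neq_switch_e f j :
  f \in M' -> f \notin ms -> j < l -> col f != col (e j).
Proof.
case: rbM' => _ _ M'inj fM fms; case: j => [|j] jl; first exact: M'_c.
rewrite col_switch_e_m //; apply: contraNneq (notin_switch_medges_neq fms (ltnW jl)).
by move/(M'inj _ _ fM (switch_m_in (ltnW jl))) ->.
Qed.

Lemma rainbow_switch_along : rainbow_matching E col (switch_along l e m M').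
Proof.
case: (rbM') => M'E M'match M'inj; split.
- apply/subsetP => f /switch_alongP[[fM _]|[j jl ->]]; first exact: (subsetP M'E).
  by case: (switch_e_edge jl).
- move=> f g /switch_alongP[[fM fms]|[i il ->]] /switch_alongP[[gM gms]|[j jl ->]] fg.
  + exact: M'match.
  + exact: vdisjoint_switch_e.
  + by rewrite vdisjointC vdisjoint_switch_e.
  + by apply: switch_e_vdisjoint => //; apply: contraNneq fg => ->.
- move=> f g /switch_alongP[[fM fms]|[i il ->]] /switch_alongP[[gM gms]|[j jl ->]] cfg.
  + exact: M'inj.
  + by move: (col_neq_switch_e fM fms jl); rewrite cfg eqxx.
  + by move: (col_neq_switch_e gM gms il); rewrite cfg eqxx.
  + by rewrite (col_switch_e_inj il jl cfg).
Qed.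

Lemma card_switch_along : #|switch_along l e m M'| = #|M'|.
Proof.
have disj : [disjoint M' :\: ms & es].
  rewrite disjoint_sym disjoints_subset; apply/subsetP => _ /switch_eedgesP[j jl ->].
  by rewrite !inE (negbTE (switch_e_notin jl)) andbF.
rewrite cardsU (disjoint_setI0 disj) cards0 subn0 cardsDS //.
by rewrite card_switch_medges card_switch_eedges subnK // -card_switch_medges subset_leq_card.
Qed.

Lemma switch_along_col f : f \in switch_along l e m M' -> col f != col (m l).
Proof.
case: rbM' => _ _ M'inj /switch_alongP[[fM fms]|[i il ->]].
  apply: contraNneq fms => /(M'inj _ _ fM (subsetP msM' _ last_switch_medges)) ->.
  exact: last_switch_medges.
exact: col_switch_e_neq_last.
Qed.

Lemma switch_along_notin_mX f :
  f \in switch_along l e m M' -> f.1 \notin switch_mX l m.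
Proof.
case: rbM' => _ M'match _ /switch_alongP[[fM fms]|[i il ->]].
  apply/negP => /switch_mXP[j jl fe].
  case/andP: (M'match _ _ fM (switch_m_in jl) (notin_switch_medges_neq fms jl)).
  by rewrite fe eqxx.
by rewrite (disjointFr disjoint_switch_eX_mX) //; apply/switch_eXP; exists i.
Qed.

End Exchange.
End Switching.

Theorem mainTheorem10 (X Y C : finType) (n : nat) (E : {set X * Y})
    (col : X * Y -> C) (M : {set X * Y}) (k : nat) (X' T : {set X}) (c : C)
    (l : nat) (e m : nat -> X * Y) (A : {set X * Y}) (B : {set X}) :
  #|C| = n.+1 ->
  proper_colouring E col ->
  rainbow_matching E col M -> #|M| = n ->
  free n E col M (2 * k) X' T c ->
  switching E col M X' l e m -> col (e 0) = c -> l <= k ->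
  A \subset M -> (forall f, f \in A -> col f != c) -> #|A| <= k ->
  B \subset X' -> #|B| <= k ->
  [disjoint switchX l e m & T] ->
  [disjoint switchX l e m & edgesX A] ->
  [disjoint switchX l e m & B] ->
  [disjoint T & edgesX A] ->
  [disjoint edgesX A & B] ->
  exists Mt : {set X * Y},
    [/\ rainbow_matching E col Mt, #|Mt| = n,
        (forall f, f \in Mt -> col f != col (m l)),
        A \subset Mt &
        (forall f, f \in Mt -> f.1 \notin switch_mX l m :|: B)].
Proof.
move=> _ _ _ _ Hfree sw e0c lk AM Ac Ak BX' Bk sT sA sB TA AB; subst c.
have le_k2 p : p <= k -> p + l <= 2 * k by move=> pk; rewrite mul2n -addnn leq_add.
have [M' [rbM' M'n AmsM' M'B M'c]] := free_switch_extension sw Hfree AM Ac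
  (le_k2 _ Ak) BX' (le_k2 _ Bk) sT sA sB TA AB.
have M'eX f : f \in M' -> f.1 \notin switch_eX l e.
  by move/M'B; rewrite inE negb_or => /andP[].
have M'nB f : f \in M' -> f.1 \notin B.
  by move/M'B; rewrite inE negb_or => /andP[].
have msM' : switch_medges l m \subset M' by apply: subset_trans AmsM'; apply: subsetUr.
exists (switch_along l e m M'); split.
- exact: (rainbow_switch_along sw rbM' msM' M'eX M'c).
- by rewrite (card_switch_along sw msM' M'eX).
- exact: (switch_along_col sw rbM' msM').
- apply: sub_switch_along; first by apply: subset_trans AmsM'; apply: subsetUl.
  by rewrite disjoint_sym (disjointWl (switch_mX_subset _ _ _) sA).
- move=> f fMt; rewrite inE negb_or (switch_along_notin_mX sw rbM' msM') //=.
  apply: switch_along_notin M'nB _ fMt.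
  exact: (disjointWl (switch_eX_subset _ _ _) sB).
Qed.
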